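(* If the ring $D(R_A)$ is simple, then the semigroup $\mathbb NA$ is scored.
   Context: $A\subset\mathbb Z^d$ is a finite set generating the group $\mathbb Z^d$; $R_A=\mathbb C[\mathbb NA]\subseteq\mathbb C[t_1^{\pm1},\dots,t_d^{\pm1}]$; $D(R_A)=\{P\in\mathbb C[t^{\pm1}]\langle\partial_1,\dots,\partial_d\rangle:P(R_A)\subseteq R_A\}$. For a facet $\sigma$ of the cone $\mathbb R_{\ge0}A$, $F_\sigma$ is the unique linear form with $F_\sigma(\mathbb R_{\ge0}A)\ge0$, $F_\sigma(\sigma)=0$, $F_\sigma(\mathbb Z^d)=\mathbb Z$. $\mathbb NA$ is scored if $\mathbb NA=\bigcap_{\sigma\text{ facet}}\{\mathbf a\in\mathbb Z^d:F_\sigma(\mathbf a)\in F_\sigma(\mathbb NA)\}$. Simple means no two-sided ideals other than $0$ and $D(R_A)$. *)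

From HB Require Import structures.
From mathcomp Require Import all_boot all_order all_algebra.
From mathcomp Require Import complex.
From mathcomp Require Import Rstruct.
Set Implicit Arguments. Unset Strict Implicit. Unset Printing Implicit Defensive.
Import Order.TTheory GRing.Theory Num.Theory.
Local Open Scope ring_scope.

Notation CC := (complex Rdefinitions.R).

(* Formal series  sum_u f(u) t^u  over Z^d (vectors u : 'rV[int]_d).
   Laurent polynomials C[t^{+-1}] are the finitely supported ones; the Weyl
   algebra with Laurent coefficients acts (faithfully) on all such series. *)
Definition ser (d : nat) := 'rV[int]_d -> CC.

Definition ev (d : nat) (i : 'I_d) : 'rV[int]_d := \row_(j < d) (j == i)%:R.

(* multiplication by the monomial t^a *)
Definition shift (d : nat) (a : 'rV[int]_d) (f : ser d) : ser d :=
  fun u => f (u - a).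

(* the partial derivative d/dt_i :  d_i t^v = v_i t^(v - e_i) *)
Definition pder (d : nat) (i : 'I_d) (f : ser d) : ser d :=
  fun u => ((u 0 i) + 1)%:~R * f (u + ev i).

Definition pderpow (d : nat) (b : 'I_d -> nat) (f : ser d) : ser d :=
  foldr (fun i g => iter (b i) (pder i) g) f (enum 'I_d).

(* P is (the action of) an element of C[t^{+-1}]<d_1,...,d_d>:
   a finite sum  sum c * t^a * d^beta. *)
Definition weyl_op (d : nat) (P : ser d -> ser d) : Prop :=
  exists s : seq (CC * 'rV[int]_d * ('I_d -> nat)),
    forall f u, P f u = \sum_(x <- s) x.1.1 * shift x.1.2 (pderpow x.2 f) u.

Definition in_NA (d : nat) (A : seq 'rV[int]_d) (u : 'rV[int]_d) : Prop :=
  exists c : 'I_(size A) -> nat, u = \sum_(i < size A) A`_i *+ c i.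

Definition generates_group (d : nat) (A : seq 'rV[int]_d) : Prop :=
  forall u : 'rV[int]_d,
    exists c : 'I_(size A) -> int, u = \sum_(i < size A) A`_i *~ c i.

Definition in_RA (d : nat) (A : seq 'rV[int]_d) (f : ser d) : Prop :=
  (exists s : seq 'rV[int]_d, forall u, f u != 0 -> u \in s) /\
  (forall u, f u != 0 -> in_NA A u).

Definition DRA (d : nat) (A : seq 'rV[int]_d) (P : ser d -> ser d) : Prop :=
  weyl_op P /\ forall f, in_RA A f -> in_RA A (P f).

Definition two_sided_ideal (d : nat) (A : seq 'rV[int]_d)
    (I : (ser d -> ser d) -> Prop) : Prop :=
  [/\ (forall P, I P -> DRA A P),
      I (fun _ _ => 0),
      (forall P Q, I P -> I Q -> I (fun f u => P f u - Q f u)) &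
      (forall P Q, DRA A P -> I Q ->
         I (fun f => P (Q f)) /\ I (fun f => Q (P f)))].

Definition DRA_simple (d : nat) (A : seq 'rV[int]_d) : Prop :=
  forall I, two_sided_ideal A I ->
    (forall P, I P -> P = (fun _ _ => 0)) \/ (forall P, DRA A P -> I P).

Definition lform (d : nat) (w u : 'rV[int]_d) : int :=
  \sum_(i < d) w 0 i * u 0 i.

(* w is the primitive linear form F_sigma of a facet sigma of the cone R_{>=0}A:
   F(Z^d) = Z, F >= 0 on A (hence on the cone), and the face
   sigma = cone /\ ker F, which is generated by the a in A with F(a) = 0,
   has dimension d-1. *)
Definition facet_form (d : nat) (A : seq 'rV[int]_d) (w : 'rV[int]_d) : Prop :=
  [/\ (exists u, lform w u = 1),
      (forall a, a \in A -> 0 <= lform w a) &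
      \rank (\matrix_(i < size A)
               (if lform w A`_i == 0
                then map_mx (fun z : int => z%:~R : rat) A`_i else 0)
             : 'M[rat]_(size A, d)) = d.-1].

Definition scored (d : nat) (A : seq 'rV[int]_d) : Prop :=
  forall u : 'rV[int]_d,
    in_NA A u <->
    (forall w, facet_form A w -> exists v, in_NA A v /\ lform w v = lform w u).

(* Let S be the set of u in Z^d with F(u) in F(NA) for every facet form F of
   the cone, and C[S] the span of the monomials t^u, u in S.  Every P in D(R_A)
   maps C[S] into itself: if y is in S and u is not, pick a facet F with F(u)
   outside F(NA); the coefficient z |-> P(t^z)(z + u - y) vanishes at the points
   of NA on the level set F = F(y), which contain long stretches of arithmetic
   progressions through y, and it is polynomial along lines, so it vanishes at
   z = y.  Hence the operators sending C[S] into R_A form a two-sided ideal.  It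
   misses 1 as soon as S <> NA, and it contains t^b for every b in NA with
   (cone /\ Z^d) + b in NA; such b exist because A generates Z^d, and S lies in
   the cone by Farkas' lemma, the separating form being rotated until its zero
   set is a facet.  So simplicity forces S = NA. *)

From HB Require Import structures.
From mathcomp Require Import all_boot all_order all_algebra.
From mathcomp Require Import complex.
From mathcomp Require Import Rstruct.
From mathcomp Require Import ring zify.
From Stdlib Require Import Classical.
Set Implicit Arguments. Unset Strict Implicit. Unset Printing Implicit Defensive.
Import Order.TTheory GRing.Theory Num.Theory.
Local Open Scope ring_scope.

Section Dot.
Variables (R : comPzRingType) (d : nat).
Implicit Types w x y : 'rV[R]_d.

Definition dot w x : R := \sum_(i < d) w 0 i * x 0 i.

Lemma dotC w x : dot w x = dot x w.
Proof. by apply: eq_bigr => i _; rewrite mulrC. Qed.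

Lemma dotE w x : dot w x = (x *m w^T) 0 0.
Proof. by rewrite mxE; apply: eq_bigr => i _; rewrite mxE mulrC. Qed.

Fact dot_is_linear w : linear_for *%R (dot w).
Proof.
move=> a x y; rewrite /dot mulr_sumr -big_split; apply: eq_bigr => i _.
by rewrite !mxE mulrDr mulrCA.
Qed.

HB.instance Definition _ w :=
  GRing.isLinear.Build R 'rV[R]_d R *%R (dot w) (dot_is_linear w).

Lemma dot0l x : dot 0 x = 0.
Proof. by rewrite dotC linear0. Qed.

Lemma dotBl w w' x : dot (w - w') x = dot w x - dot w' x.
Proof. by rewrite dotC linearB /= !(dotC x). Qed.

Lemma dotZl c w x : dot (c *: w) x = c * dot w x.
Proof. by rewrite dotC linearZ /= dotC. Qed.

Lemma dotNl w x : dot (- w) x = - dot w x.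
Proof. by rewrite dotC linearN /= dotC. Qed.
End Dot.

Lemma lformE d : @lform d = @dot int d.
Proof. by []. Qed.

Lemma mulmxzE (V : zmodType) m n (M : 'M[V]_(m, n)) (c : int) i j :
  (M *~ c) i j = M i j *~ c.
Proof. by case: c => k; rewrite ?NegzE ?mulrNz ?mxE mulmxnE. Qed.

Lemma row_sum_ev d (r : 'rV[int]_d) : r = \sum_j ev j *~ r 0 j.
Proof.
apply/rowP => k; rewrite summxE (bigD1 k) //= big1 => [|j /negPf jk].
  by rewrite mulmxzE !mxE eqxx mulrzz mul1r addr0.
by rewrite mulmxzE !mxE eq_sym jk mulrzz mul0r.
Qed.

Section Farkas.
Variables (R : realFieldType) (d : nat).
Implicit Types (a w x y : 'rV[R]_d).

Definition in_cone n (b : 'I_n -> 'rV[R]_d) x :=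
  exists2 l : 'I_n -> R, forall i, 0 <= l i & x = \sum_i l i *: b i.

Definition proj_along a w y := y - (dot w y / dot w a) *: a.

(* Fourier-Motzkin elimination of [b ord0]. *)
Lemma in_cone_proj_along n (b : 'I_n.+1 -> 'rV[R]_d) x w :
  dot w (b ord0) < 0 -> (forall i, 0 <= dot w (b (lift ord0 i))) -> dot w x <= 0 ->
  in_cone (fun i => proj_along (b ord0) w (b (lift ord0 i))) (proj_along (b ord0) w x) ->
  in_cone b x.
Proof.
set a := b ord0 => wa_lt0 wb wx_le0 [mu mu_ge0 proj_x].
pose lam := (dot w x - \sum_i mu i * dot w (b (lift ord0 i))) / dot w a.
exists (fun i => oapp mu lam (unlift ord0 i)) => [i|].
  case: unliftP => [j _|_] //=; rewrite /lam ler_ndivlMr // mul0r subr_le0.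
  by apply: le_trans wx_le0 _; apply: sumr_ge0 => j _; rewrite mulr_ge0.
rewrite big_ord_recl unlift_none.
under [X in _ = _ + X]eq_bigr do rewrite liftK.
rewrite -[x](subrK ((dot w x / dot w a) *: a)) -/(proj_along a w x) proj_x.
rewrite (eq_bigr (fun i => mu i *: b (lift ord0 i) -
                         (mu i * (dot w (b (lift ord0 i)) / dot w a)) *: a)); last first.
  by move=> i _; rewrite /proj_along scalerBr scalerA.
rewrite sumrB -scaler_suml -addrA addrC; congr (_ + _).
rewrite -scaleNr -scalerDl; congr (_ *: _).
by under eq_bigr do rewrite mulrA; rewrite -mulr_suml /lam mulrBl addrC.
Qed.

Lemma in_cone_lift0 n (b : 'I_n.+1 -> 'rV[R]_d) x :
  in_cone (fun i => b (lift ord0 i)) x -> in_cone b x.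
Proof.
move=> [l l_ge0 ->]; exists (fun i => oapp l 0 (unlift ord0 i)) => [i|].
  by case: unliftP => [j _|_] /=.
rewrite big_ord_recl unlift_none scale0r add0r.
by apply: eq_bigr => i _; rewrite liftK.
Qed.

Lemma dotxx_gt0 x : x != 0 -> 0 < dot x x.
Proof.
move=> x_neq0; have [j xj] : exists j, x 0 j != 0.
  apply/existsP; apply: contraR x_neq0; rewrite negb_exists => /forallP x0.
  by apply/eqP/rowP => j; rewrite mxE; apply/eqP/negPn.
rewrite /dot (bigD1 j) //= ltr_wpDr ?sumr_ge0 // => [i _|]; first by rewrite -expr2 sqr_ge0.
by rewrite -expr2 lt_def sqr_ge0 andbT sqrf_eq0.
Qed.

Lemma farkas n (b : 'I_n -> 'rV[R]_d) x : ~ in_cone b x ->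
  exists w, (forall i, 0 <= dot w (b i)) /\ dot w x < 0.
Proof.
elim: n b x => [|n IH] b x nbx.
  exists (- x); split=> [[]//|]; rewrite dotNl oppr_lt0 dotxx_gt0 //.
  by apply: contra_notN nbx => /eqP ->; exists (fun _ => 0) => //; rewrite big_ord0.
pose a := b ord0.
have [w wb wx] : exists2 w, (forall i, 0 <= dot w (b (lift ord0 i))) & dot w x < 0.
  by have [w []] := IH _ x (contra_not (@in_cone_lift0 _ b x) nbx); exists w.
have [wa_ge0|wa_lt0] := leP 0 (dot w a).
  by exists w; split=> // i; case: (unliftP ord0 i) => [j|] ->.
pose proj := proj_along a w.
have [w' [w'b w'x]] := IH (fun i => proj (b (lift ord0 i))) (proj x)
  (contra_not (in_cone_proj_along wa_lt0 wb (ltW wx)) nbx).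
pose w'' := w' - (dot w' a / dot w a) *: w.
have w''E y : dot w'' y = dot w' (proj y).
  by rewrite dotBl dotZl /proj /proj_along linearB linearZ /=; congr (_ - _); ring.
exists w''; split; last by rewrite w''E.
move=> i; rewrite w''E; case: (unliftP ord0 i) => [j|] -> //.
by rewrite /proj /proj_along mulfV ?lt_eqF // scale1r subrr linear0.
Qed.
End Farkas.

Section Faces.
Variables (R : realFieldType) (d n : nat) (b : 'I_n -> 'rV[R]_d).
Implicit Types (v w x : 'rV[R]_d).

Definition face_mx w : 'M[R]_(n, d) :=
  \matrix_i (if dot w (b i) == 0 then b i else 0).

Lemma dot_row_mulmx_tr m (M : 'M[R]_(m, d)) v i : (M *m v^T) i 0 = dot v (row i M).
Proof. by rewrite dotE -row_mul [RHS]mxE. Qed.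

Lemma face_mxZ c w : c != 0 -> face_mx (c *: w) = face_mx w.
Proof.
by move=> c_neq0; apply/row_matrixP => i; rewrite !rowK dotZl mulf_eq0 (negPf c_neq0).
Qed.

Lemma face_mx_orth w : face_mx w *m w^T = 0.
Proof.
apply/matrixP => i j; rewrite (ord1 j) dot_row_mulmx_tr rowK mxE.
by case: ifP => [/eqP //|_]; rewrite linear0.
Qed.

Lemma rank_face_mx_le w : w != 0 -> (\rank (face_mx w) <= d.-1)%N.
Proof.
move=> w_neq0; have := mulmx0_rank_max (face_mx_orth w).
by rewrite mxrank_tr rank_rV w_neq0 addn1; lia.
Qed.

Lemma submx_face_mx w x : w != 0 -> \rank (face_mx w) = d.-1 ->
  dot w x = 0 -> (x <= face_mx w)%MS.
Proof.
move=> w_neq0 rk wx; pose M := col_mx (face_mx w) x.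
have xw : x *m w^T = 0 by apply/rowP => j; rewrite (ord1 j) -dotE wx mxE.
have Mw : M *m w^T = 0 by rewrite mul_col_mx face_mx_orth xw col_mx0.
have := mulmx0_rank_max Mw; rewrite mxrank_tr rank_rV w_neq0 => rkM.
have faceM : (face_mx w <= M)%MS by rewrite -addsmxE addsmxSl.
apply: submx_trans (_ : M <= face_mx w)%MS; first by rewrite -addsmxE addsmxSr.
have [face_le_M <-] := mxrank_leqif_sup faceM.
by rewrite eqn_leq face_le_M rk /=; move: rkM => /=; lia.
Qed.

Hypothesis b_spans : forall v, (forall i, dot v (b i) = 0) -> v = 0.

Lemma rotation_direction x w : (\rank (face_mx w) < d.-1)%N ->
  exists v, [/\ face_mx w *m v^T = 0, dot v x = 0 &
                exists i, dot v (b i) < 0].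
Proof.
move=> rk; pose M := col_mx (face_mx w) x.
have rkM : (\rank M < d)%N.
  rewrite -addsmxE; have := (mxrank_adds_leqif (face_mx w) x).1.
  by have := rank_leq_row x; lia.
have [v v_neq0 Mv] : exists2 v : 'rV[R]_d, v != 0 & M *m v^T = 0.
  have : kermx M^T != 0 by rewrite -mxrank_eq0 mxrank_ker mxrank_tr -lt0n subn_gt0.
  move=> /eqP K_neq0; have [i rowi] : exists i, row i (kermx M^T) != 0.
    apply/existsP; apply: contra_notT K_neq0; rewrite negb_exists => /forallP K0.
    by apply/row_matrixP => i; rewrite row0; apply/eqP/negPn.
  exists (row i (kermx M^T)) => //.
  by apply: trmx_inj; rewrite trmx_mul trmxK trmx0 -row_mul mulmx_ker row0.
move: Mv; rewrite mul_col_mx => /eqP; rewrite col_mx_eq0 => /andP [/eqP vface /eqP vx].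
have [i0 vi0] : exists i0, dot v (b i0) != 0.
  apply/existsP; apply: contraNT v_neq0; rewrite negb_exists => /forallP vb.
  by apply/eqP/b_spans => i; apply/eqP/negPn.
have vxE : dot v x = 0 by rewrite dotE vx mxE.
have [vi0_lt0|vi0_ge0] := ltP (dot v (b i0)) 0; first by exists v; split=> //; exists i0.
exists (- v); split; first by rewrite linearN mulmxN vface oppr0.
  by rewrite dotNl vxE oppr0.
by exists i0; rewrite dotNl oppr_lt0 lt_def vi0.
Qed.

(* Rotate [w] towards [v] until a new generator enters the face; [x] stays on
   the negative side since [dot v x = 0]. *)
Lemma enlarge_face x w : (forall i, 0 <= dot w (b i)) -> dot w x < 0 ->
  (\rank (face_mx w) < d.-1)%N ->
  exists w', [/\ (forall i, 0 <= dot w' (b i)), dot w' x < 0 &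
                 (\rank (face_mx w) < \rank (face_mx w'))%N].
Proof.
move=> wb wx /(rotation_direction x) [v [vface vx [i0 vi0]]].
have face_v i : dot w (b i) = 0 -> dot v (b i) = 0.
  move=> wi; have /matrixP/(_ i 0) := vface.
  by rewrite dot_row_mulmx_tr rowK wi eqxx mxE.
pose t i := dot w (b i) / - dot v (b i).
have [j vj jmin] := arg_minP t (vi0 : (fun i : 'I_n => dot v (b i) < 0) i0).
have t_ge0 : 0 <= t j by rewrite divr_ge0 ?wb // oppr_ge0 ltW.
pose w' := w + t j *: v.
have w'E y : dot w' y = dot w y + t j * dot v y.
  by rewrite /w' dotC linearD linearZ /= !(dotC y).
exists w'; split.
- move=> k; rewrite w'E.
  have [vk_ge0|vk_lt0] := leP 0 (dot v (b k)).
    by apply: addr_ge0; [exact: wb | apply: mulr_ge0].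
  have := jmin k vk_lt0; rewrite ler_pdivlMr ?oppr_gt0 //.
  by rewrite mulrN lerNl -subr_ge0 opprK addrC.
- by rewrite w'E vx mulr0 addr0.
apply: rank_ltmx; rewrite ltmxE; apply/andP; split.
  apply/row_subP => k; rewrite rowK; case: ifP => [/eqP wk|]; last by rewrite sub0mx.
  have <- : row k (face_mx w') = b k by rewrite rowK w'E wk face_v // mulr0 addr0 eqxx.
  exact: row_sub.
have face'_j : row j (face_mx w') = b j.
  by rewrite rowK w'E /t invrN mulrN mulNr divfK ?subrr ?eqxx // lt_eqF.
apply/negP => /(submx_trans (row_sub j _)); rewrite face'_j => /submxP [D DE].
by move: vj; rewrite dotE DE -mulmxA vface mulmx0 mxE ltxx.
Qed.

Lemma facet_separation x w : (forall i, 0 <= dot w (b i)) -> dot w x < 0 ->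
  exists w', [/\ (forall i, 0 <= dot w' (b i)), dot w' x < 0 & \rank (face_mx w') = d.-1].
Proof.
have [k] := ubnP (d - \rank (face_mx w)); elim: k w => // k IH w rk_lt wb wx.
have w_neq0 : w != 0 by apply: contraTneq wx => ->; rewrite dot0l ltxx.
have [rk|rk_neq] := eqVneq (\rank (face_mx w)) d.-1; first by exists w.
have /(enlarge_face wb wx) [w' [w'b w'x rk']] : (\rank (face_mx w) < d.-1)%N.
  by rewrite ltn_neqAle rk_neq rank_face_mx_le.
apply: IH w'b w'x; have := rank_face_mx_le w_neq0; lia.
Qed.
End Faces.

Local Notation qrow u := (map_mx (fun z : int => z%:~R : rat) u).

Lemma dot_qrow d (w u : 'rV[int]_d) : dot (qrow w) (qrow u) = (lform w u)%:~R.
Proof. by rewrite rmorph_sum; apply: eq_bigr => i _; rewrite !mxE rmorphM. Qed.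

Lemma qrow_sum_mulz d n (a : 'I_n -> 'rV[int]_d) (c : 'I_n -> int) :
  qrow (\sum_i a i *~ c i) = \sum_i qrow (a i) *~ c i.
Proof. by rewrite raddf_sum; apply: eq_bigr => i _; rewrite raddfMz. Qed.

Section Generators.
Variables (d : nat) (A : seq 'rV[int]_d).

Definition qgen (i : 'I_(size A)) : 'rV[rat]_d := qrow A`_i.

Lemma generates_group_spans : generates_group A ->
  forall v, (forall i, dot v (qgen i) = 0) -> v = 0.
Proof.
move=> gen v v_orth; apply/rowP => j; have [c cE] := gen (ev j).
have := congr1 (fun u => dot v (qrow u)) cE; rewrite qrow_sum_mulz linear_sum /=.
rewrite big1 => [vj|i _]; last by rewrite raddfMz /= v_orth mul0rz.
rewrite mxE -vj /dot (bigD1 j) //= big1 => [|k /negPf kj]; last by rewrite !mxE kj mulr0.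
by rewrite !mxE eqxx mulr1 addr0.
Qed.

Lemma face_mx_qgen F :
  \matrix_(i < size A) (if lform F A`_i == 0 then qrow A`_i else 0) =
  face_mx qgen (qrow F).
Proof. by apply/row_matrixP => i; rewrite !rowK dot_qrow intr_eq0. Qed.
End Generators.
Arguments qgen {d} A i.

Lemma clear_denominators (I : finType) (r : I -> rat) :
  exists2 D : int, 0 < D & exists z : I -> int, forall i, (z i)%:~R = D%:~R * r i.
Proof.
exists (\prod_i denq (r i)); first by apply: prodr_gt0 => i _; exact: denq_gt0.
exists (fun i => numq (r i) * \prod_(j | j != i) denq (r j)) => i.
by rewrite [in RHS](bigD1 i) //= !intrM numqE; ring.
Qed.

Lemma lform_ev d (w : 'rV[int]_d) i : lform w (ev i) = w 0 i.
Proof.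
rewrite /lform (bigD1 i) //= big1 => [|j /negPf ji]; last by rewrite mxE ji mulr0.
by rewrite mxE eqxx mulr1 addr0.
Qed.

(* Bezout, one coordinate at a time. *)
Lemma lform_gcd_prefix d (z : 'rV[int]_d) k : exists u,
  0 <= lform z u /\ forall j : 'I_d, (j < k)%N -> (lform z u %| z 0%R j)%Z.
Proof.
elim: k => [|k [u [zu_ge0 zu_dvd]]]; first by exists 0; rewrite lformE linear0.
have [dk|kd] := leqP d k.
  by exists u; split=> // j jk; apply: zu_dvd; apply: leq_trans (ltn_ord j) dk.
pose kk := Ordinal kd; have [a [b ab]] := Bezoutz (lform z u) (z 0 kk).
exists (u *~ a + ev kk *~ b).
have -> : lform z (u *~ a + ev kk *~ b) = gcdz (lform z u) (z 0 kk).
  rewrite -ab lformE linearD !raddfMz /= -lformE mulrzz mulrC; congr (_ + _).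
  by rewrite lform_ev mulrzz mulrC.
split=> // j; rewrite ltnS leq_eqVlt => /predU1P [jk|jk].
  by rewrite (_ : j = kk) ?dvdz_gcdr //; apply: val_inj.
exact: dvdz_trans (dvdz_gcdl _ _) (zu_dvd j jk).
Qed.

Lemma primitive_multiple d (z : 'rV[int]_d) : z != 0 ->
  exists F : 'rV[int]_d, (exists u, lform F u = 1) /\ exists2 g : int, 0 < g & z = g *: F.
Proof.
move=> z_neq0; have [u [g_ge0 g_dvd]] := lform_gcd_prefix z d.
set g := lform z u in g_ge0 g_dvd.
have {}g_dvd j : (g %| z 0%R j)%Z := g_dvd j (ltn_ord j).
have g_gt0 : 0 < g.
  rewrite lt_def g_ge0 andbT; apply: contraNneq z_neq0 => g0.
  by apply/eqP/rowP => j; rewrite mxE; apply/eqP; rewrite -dvd0z -g0 g_dvd.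
pose F := \row_j (z 0%R j %/ g)%Z.
have zE : z = g *: F by apply/rowP => j; rewrite !mxE mulrC divzK.
exists F; split; last by exists g.
by exists u; apply: (mulfI (lt0r_neq0 g_gt0)); rewrite mulr1 lformE -dotZl -zE.
Qed.

Lemma primitive_form_of_rat d (w : 'rV[rat]_d) : w != 0 ->
  exists F : 'rV[int]_d,
    (exists u, lform F u = 1) /\ exists2 c : rat, 0 < c & qrow F = c *: w.
Proof.
move=> w_neq0; have [D D_gt0 [z zE]] := clear_denominators (fun k => w 0 k).
pose zr := \row_k z k.
have zrE : qrow zr = D%:~R *: w by apply/rowP => k; rewrite !mxE zE.
have zr_neq0 : zr != 0.
  apply: contraNneq w_neq0 => zr0; move: zrE; rewrite zr0 map_mx0 => /esym/eqP.
  by rewrite scaler_eq0 intr_eq0 gt_eqF.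
have [F [Fu [g g_gt0 zrF]]] := primitive_multiple zr_neq0.
have g_neq0 : g%:~R != 0 :> rat by rewrite intr_eq0 gt_eqF.
exists F; split=> //; exists (g%:~R^-1 * D%:~R); first by rewrite mulr_gt0 ?invr_gt0 ?ltr0z.
by rewrite -scalerA -zrE zrF map_mxZ scalerK.
Qed.

Lemma facet_form_separation d (A : seq 'rV[int]_d) x : generates_group A ->
  ~ in_cone (qgen A) (qrow x) -> exists2 F, facet_form A F & lform F x < 0.
Proof.
move=> gen /farkas [w [wA wx]].
have [w' [w'A w'x rk]] := facet_separation (generates_group_spans gen) wA wx.
have w'_neq0 : w' != 0 by apply: contraTneq w'x => ->; rewrite dot0l ltxx.
have [F [Fu [c c_gt0 FE]]] := primitive_form_of_rat w'_neq0.
have lformF y : (lform F y)%:~R = c * dot w' (qrow y) by rewrite -dot_qrow FE dotZl.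
exists F; last by rewrite -(ltrz0 rat) lformF pmulr_rlt0.
split=> // [a aA|]; last by rewrite face_mx_qgen FE face_mxZ ?gt_eqF.
have aA' : (index a A < size A)%N by rewrite index_mem.
by rewrite -(ler0z rat) lformF pmulr_rge0 // -(nth_index 0 aA) (w'A (Ordinal aA')).
Qed.

Section Semigroup.
Variables (d : nat) (A : seq 'rV[int]_d).

Lemma in_NA_add u v : in_NA A u -> in_NA A v -> in_NA A (u + v).
Proof.
move=> [c ->] [c' ->]; exists (fun i => (c i + c' i)%N).
by rewrite -big_split; apply: eq_bigr => i _; rewrite mulrnDr.
Qed.

Lemma in_NA_sum_mulz (k : 'I_(size A) -> int) :
  (forall i, 0 <= k i) -> in_NA A (\sum_(i < size A) A`_i *~ k i).
Proof.
move=> k_ge0; exists (fun i => absz (k i)).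
by apply: eq_bigr => i _; rewrite pmulrn gez0_abs.
Qed.

Lemma generated_coef_bound : generates_group A -> forall M : 'I_d -> int,
  exists N : int, forall r : 'rV[int]_d, (forall j, `|r 0 j| <= M j) ->
    exists2 s, r = \sum_(i < size A) A`_i *~ s i & forall i, `|s i| <= N.
Proof.
move=> gen M; have [C evE] : exists C : 'I_d -> 'I_(size A) -> int,
    forall j, ev j = \sum_(i < size A) A`_i *~ C j i.
  exact: (fin_all_exists (fun j => gen (ev j))).
exists (\sum_j \sum_i M j * `|C j i|) => r r_le.
have M_ge0 j : 0 <= M j by apply: le_trans (r_le j).
exists (fun i => \sum_j r 0 j * C j i) => [|i].
  rewrite {1}[r]row_sum_ev; under eq_bigr do rewrite evE mulrz_suml.
  rewrite exchange_big /=; apply: eq_bigr => i _; rewrite mulrz_sumr.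
  by apply: eq_bigr => j _; rewrite -mulrzA mulrC.
apply: le_trans (ler_norm_sum _ _ _) _; apply: ler_sum => j _.
rewrite (bigD1 i) //= normrM ler_wpDr ?ler_wpM2r ?sumr_ge0 // => k _.
by rewrite mulr_ge0.
Qed.

Lemma cone_floor_decomposition x : in_cone (qgen A) (qrow x) ->
  exists2 f : 'I_(size A) -> int, forall i, 0 <= f i &
    forall j, `|(x - \sum_(i < size A) A`_i *~ f i) 0 j| <= \sum_(i < size A) `|A`_i 0 j|.
Proof.
move=> [l l_ge0 xE]; exists (fun i => Num.floor (l i)) => [i|j].
  by rewrite floor_ge0.
rewrite -(ler_int rat) intr_norm !mxE summxE rmorphB rmorph_sum /=.
have -> : (x 0 j)%:~R = \sum_i l i * (A`_i 0 j)%:~R :> rat.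
  by have /rowP/(_ j) := xE; rewrite !mxE summxE => ->; apply: eq_bigr => i _; rewrite !mxE.
rewrite -sumrB rmorph_sum /=; apply: le_trans (ler_norm_sum _ _ _) _; apply: ler_sum => i _.
have frac_lt1 : l i - (Num.floor (l i))%:~R < 1.
  by rewrite ltrBlDl; have := floorD1_gt (l i); rewrite intrD.
rewrite mulmxzE mulrzz [_ * Num.floor _]mulrC intrM -mulrBl normrM intr_norm.
by rewrite ler_piMl // ger0_norm ?subr_ge0 ?floor_le // ltW.
Qed.

Lemma conductor : generates_group A ->
  exists2 b, in_NA A b & forall x, in_cone (qgen A) (qrow x) -> in_NA A (x + b).
Proof.
move=> gen; pose M j := \sum_(i < size A) `|A`_i 0 j|.
have [N bound] := generated_coef_bound gen M.
have N_ge0 (i : 'I_(size A)) : 0 <= N.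
  have [|s _ s_le] := bound 0 => [j|]; first by rewrite mxE normr0 sumr_ge0.
  exact: le_trans (s_le i).
exists (\sum_(i < size A) A`_i *~ N) => [|x /cone_floor_decomposition [f f_ge0 r_le]].
  exact: in_NA_sum_mulz.
have [s rE s_le] := bound _ r_le.
have -> : x + \sum_(i < size A) A`_i *~ N =
    \sum_(i < size A) A`_i *~ (f i + s i + N).
  rewrite -[x](subrK (\sum_(i < size A) A`_i *~ f i)) rE -!big_split /=.
  by apply: eq_bigr => i _; rewrite !mulrzDr [_ *~ s i + _]addrC.
apply: in_NA_sum_mulz => i; have := s_le i; rewrite ler_norml => /andP [s_ge _].
by have := f_ge0 i; lia.
Qed.
End Semigroup.

Section Facet.
Variables (d : nat) (A : seq 'rV[int]_d) (F : 'rV[int]_d).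
Hypothesis F_facet : facet_form A F.

(* The generators on the facet span its hyperplane over Q. *)
Lemma facet_lattice x : lform F x = 0 ->
  exists2 m, (0 < m)%N & exists z : 'I_(size A) -> int,
    (forall i : 'I_(size A), lform F A`_i != 0 -> z i = 0) /\
    x *+ m = \sum_(i < size A) A`_i *~ z i.
Proof.
case: F_facet => [[u Fu] _ rk] Fx.
have qF_neq0 : qrow F != 0.
  apply/eqP => qF0; have := dot_qrow F u.
  by rewrite qF0 dot0l Fu => /esym/eqP; rewrite oner_eq0.
rewrite face_mx_qgen in rk.
have /submxP [r] := submx_face_mx qF_neq0 rk (etrans (dot_qrow F x) (congr1 _ Fx)).
rewrite -face_mx_qgen => xE.
have [D D_gt0 [z zE]] := clear_denominators (fun i => r 0 i).
exists `|D|%N; first by rewrite absz_gt0 gt_eqF.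
exists (fun i : 'I_(size A) => if lform F A`_i == 0 then z i else 0).
split=> [i /negPf -> //|].
apply/rowP => k; apply: (@intr_inj rat); have /rowP/(_ k) := xE; rewrite !mxE => xk.
rewrite mulmxnE rmorphMn /= -mulr_natr natr_absz ger0_norm ?ltW // xk mulr_suml.
rewrite summxE rmorph_sum; apply: eq_bigr => j _; rewrite mulmxzE mulrzz !mxE.
by case: ifP => _; rewrite ?mxE rmorphM /= ?zE; ring.
Qed.

Lemma facet_progression v0 x : in_NA A v0 -> lform F x = 0 ->
  exists2 m, (0 < m)%N & exists2 c, lform F c = 0 & exists K,
    forall n k, (n * K <= k)%N -> in_NA A (v0 + x *+ (m * n) + c *+ k).
Proof.
move=> [cv ->] /facet_lattice [m m_gt0 [z [z_off xE]]]; exists m => //.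
pose e (i : 'I_(size A)) : int := (lform F A`_i == 0)%:Z.
exists (\sum_(i < size A) A`_i *~ e i).
  rewrite lformE linear_sum big1 // => i _; rewrite raddfMz /= -lformE /e.
  by case: eqP => [->|]; rewrite ?mul0rz.
exists (\sum_i `|z i|)%N => n k nk.
have -> : \sum_(i < size A) A`_i *+ cv i + x *+ (m * n) +
          (\sum_(i < size A) A`_i *~ e i) *+ k =
    \sum_(i < size A) A`_i *~ ((cv i)%:Z + z i * n%:Z + e i * k%:Z).
  rewrite mulrnA xE -!sumrMnl -!big_split /=.
  by apply: eq_bigr => i _; rewrite !mulrzDr !pmulrn -!mulrzA.
apply: in_NA_sum_mulz => i; rewrite /e.
have [Fi|/z_off ->] := eqVneq (lform F A`_i) 0; last by rewrite mul0r mul0r !addr0.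
have z_le : (`|z i| <= \sum_i `|z i|)%N by rewrite (bigD1 i) //= leq_addr.
have := lez_abs (- z i); rewrite abszN /=; nia.
Qed.
End Facet.

Section WeylAlgebra.
Variable d : nat.
Implicit Types (f g : ser d) (a u v : 'rV[int]_d) (b : 'I_d -> nat).

Definition pder_coef b u : CC := \prod_(i < d) \prod_(k < b i) (u 0 i + k.+1%:Z)%:~R.

Definition nat_row b : 'rV[int]_d := \row_i (b i)%:Z.

Lemma iter_pderE i n f u :
  iter n (pder i) f u = (\prod_(k < n) (u 0 i + k.+1%:Z)%:~R) * f (u + ev i *+ n).
Proof.
elim: n u => [|n IH] u; first by rewrite big_ord0 mul1r mulr0n addr0.
rewrite iterS /pder IH big_ord_recl /= -mulrA mulrS addrA; congr (_ * (_ * _)).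
apply: eq_bigr => k _; rewrite !mxE eqxx /bump /=; congr (_%:~R); lia.
Qed.

Lemma foldr_iter_pderE b (l : seq 'I_d) f u : uniq l ->
  foldr (fun i g => iter (b i) (pder i) g) f l u =
  (\prod_(i <- l) \prod_(k < b i) (u 0 i + k.+1%:Z)%:~R) *
  f (u + \sum_(i <- l) ev i *+ b i).
Proof.
elim: l u => [|i l IH] u /=; first by rewrite !big_nil mul1r addr0.
case/andP => il ul; rewrite iter_pderE IH // !big_cons -mulrA addrA; congr (_ * (_ * _)).
rewrite !big_seq; apply: eq_bigr => j jl; apply: eq_bigr => k _.
have /negPf ji : j != i by apply: contraNneq il => <-.
by rewrite !mxE mulmxnE mxE ji mul0rn addr0.
Qed.

Lemma pderpowE b f u : pderpow b f u = pder_coef b u * f (u + nat_row b).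
Proof.
rewrite /pderpow foldr_iter_pderE ?enum_uniq // /pder_coef !big_enum /=.
congr (_ * f (_ + _)).
apply/rowP => j; rewrite summxE (bigD1 j) //= big1 => [|k /negPf kj].
  by rewrite mulmxnE !mxE eqxx addr0 mulr1n natz.
by rewrite mulmxnE mxE eq_sym kj mul0rn.
Qed.

Definition weyl_term (t : CC * 'rV[int]_d * ('I_d -> nat)) f : ser d :=
  fun u => t.1.1 * shift t.1.2 (pderpow t.2 f) u.

Lemma weyl_termE t f u :
  weyl_term t f u = t.1.1 * pder_coef t.2 (u - t.1.2) * f (u - t.1.2 + nat_row t.2).
Proof. by rewrite /weyl_term /shift pderpowE mulrA. Qed.

Lemma weyl_op_ext (P Q : ser d -> ser d) :
  (forall f u, P f u = Q f u) -> weyl_op Q -> weyl_op P.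
Proof. by move=> PQ [s sE]; exists s => f u; rewrite PQ sE. Qed.

Lemma weyl_op0 : weyl_op (fun (_ : ser d) (_ : 'rV[int]_d) => 0).
Proof. by exists [::] => f u; rewrite big_nil. Qed.

Lemma weyl_opD (P Q : ser d -> ser d) : weyl_op P -> weyl_op Q ->
  weyl_op (fun f u => P f u + Q f u).
Proof. by move=> [s sE] [s' s'E]; exists (s ++ s') => f u; rewrite big_cat sE s'E. Qed.

Lemma weyl_op_sum (T : Type) (r : seq T) (P : T -> ser d -> ser d) :
  (forall x, weyl_op (P x)) -> weyl_op (fun f u => \sum_(x <- r) P x f u).
Proof.
move=> WP; elim: r => [|x r IH].
  by apply: weyl_op_ext weyl_op0 => f u; rewrite big_nil.
by apply: weyl_op_ext (weyl_opD (WP x) IH) => f u; rewrite big_cons.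
Qed.

Lemma weyl_op_scale_shift c a (P : ser d -> ser d) : weyl_op P ->
  weyl_op (fun f u => c * shift a (P f) u).
Proof.
move=> [s sE]; exists [seq (c * t.1.1, a + t.1.2, t.2) | t <- s] => f u.
rewrite /shift sE big_map mulr_sumr; apply: eq_bigr => t _.
by rewrite /shift /= opprD addrA mulrA.
Qed.

Lemma weyl_opB (P Q : ser d -> ser d) : weyl_op P -> weyl_op Q ->
  weyl_op (fun f u => P f u - Q f u).
Proof.
move=> WP /(weyl_op_scale_shift (-1) 0) WQ.
by apply: weyl_op_ext (weyl_opD WP WQ) => f u; rewrite /shift subr0 mulN1r.
Qed.

Lemma weyl_op_id : @weyl_op d id.
Proof.
exists [:: (1, 0, fun _ => 0%N)] => f u; rewrite big_seq1 -/(weyl_term _ f u) weyl_termE /=.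
rewrite subr0 /pder_coef big1 => [|i _]; last by rewrite big_ord0.
by rewrite !mul1r (_ : nat_row _ = 0) ?addr0 //; apply/rowP => j; rewrite !mxE.
Qed.

Lemma weyl_op_shift a : weyl_op (shift a).
Proof.
by apply: weyl_op_ext (weyl_op_scale_shift 1 a weyl_op_id) => f u; rewrite mul1r.
Qed.

Definition incr_at b i : 'I_d -> nat := fun j => (b j + (j == i))%N.

Lemma nat_row_incr b i : nat_row (incr_at b i) = nat_row b + ev i.
Proof. by apply/rowP => j; rewrite !mxE /incr_at PoszD; case: (j == i). Qed.

Lemma pder_coef_incr b i v :
  pder_coef (incr_at b i) v = (v 0 i + 1)%:~R * pder_coef b (v + ev i).
Proof.
rewrite /pder_coef (bigD1 i) //= [in RHS](bigD1 i) //= mulrA; congr (_ * _).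
  rewrite /incr_at eqxx addn1 big_ord_recl /=; congr (_ * _).
  by apply: eq_bigr => k _; rewrite !mxE eqxx /bump /=; congr (_%:~R); lia.
apply: eq_bigr => j /negPf ji; rewrite /incr_at ji addn0.
by apply: eq_bigr => k _; rewrite !mxE ji addr0.
Qed.

(* The commutation rule  d_i t^a = t^a d_i + a_i t^(a - e_i). *)
Lemma pder_weyl_term i t f u :
  pder i (weyl_term t f) u =
  weyl_term (t.1.1, t.1.2, incr_at t.2 i) f u +
  weyl_term (t.1.1 * (t.1.2 0 i)%:~R, t.1.2 - ev i, t.2) f u.
Proof.
rewrite /pder !weyl_termE /= pder_coef_incr nat_row_incr.
have -> : u + ev i - t.1.2 + nat_row t.2 = u - t.1.2 + (nat_row t.2 + ev i).
  by apply/rowP => k; rewrite !mxE; ring.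
have -> : u - (t.1.2 - ev i) + nat_row t.2 = u - t.1.2 + (nat_row t.2 + ev i).
  by apply/rowP => k; rewrite !mxE; ring.
have -> : u - t.1.2 + ev i = u + ev i - t.1.2 by rewrite addrAC.
have -> : u - (t.1.2 - ev i) = u + ev i - t.1.2.
  by apply/rowP => k; rewrite !mxE; ring.
by rewrite !mxE !intrD intrN; ring.
Qed.

Lemma weyl_op_pder i (P : ser d -> ser d) : weyl_op P -> weyl_op (fun f => pder i (P f)).
Proof.
move=> [s sE]; exists (flatten [seq [:: (t.1.1, t.1.2, incr_at t.2 i);
    (t.1.1 * (t.1.2 0 i)%:~R, t.1.2 - ev i, t.2)] | t : _ * 'rV_d * _ <- s]) => f u.
rewrite big_flatten /= big_map /pder sE mulr_sumr; apply: eq_bigr => t _.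
by rewrite big_cons big_seq1 -pder_weyl_term.
Qed.

Lemma weyl_op_pderpow b (P : ser d -> ser d) : weyl_op P ->
  weyl_op (fun f => pderpow b (P f)).
Proof.
move=> WP; rewrite /pderpow; elim: (enum 'I_d) => [|i l IH] //=.
by elim: (b i) => [|n IHn] //=; exact: weyl_op_pder.
Qed.

Lemma weyl_op_comp (P Q : ser d -> ser d) : weyl_op P -> weyl_op Q ->
  weyl_op (fun f => P (Q f)).
Proof.
move=> [s sE] WQ; have WS : weyl_op (fun f u => \sum_(t <- s) weyl_term t (Q f) u).
  by apply: weyl_op_sum => t; exact/weyl_op_scale_shift/weyl_op_pderpow.
by apply: weyl_op_ext WS => f u; rewrite sE.
Qed.
End WeylAlgebra.

Definition polyfun (F : nat -> CC) := exists p : {poly CC}, forall t : nat, p.[t%:R] = F t.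

Lemma polyfun_ext F G : (forall t, F t = G t) -> polyfun G -> polyfun F.
Proof. by move=> FG [p pE]; exists p => t; rewrite pE FG. Qed.

Lemma polyfun_const c : polyfun (fun _ => c).
Proof. by exists c%:P => t; rewrite hornerC. Qed.

Lemma polyfun_affine (c0 c1 : int) : polyfun (fun t => (c0 + c1 *+ t)%:~R).
Proof.
exists (c0%:~R%:P + c1%:~R *: 'X) => t.
by rewrite hornerD hornerC hornerZ hornerX intrD rmorphMn /= mulr_natr.
Qed.

Lemma polyfun_sum (T : Type) (r : seq T) (F : T -> nat -> CC) :
  (forall x, polyfun (F x)) -> polyfun (fun t => \sum_(x <- r) F x t).
Proof.
move=> PF; elim: r => [|x r [q qE]]; first by exists 0 => t; rewrite horner0 big_nil.
by have [p pE] := PF x; exists (p + q) => t; rewrite hornerD pE qE big_cons.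
Qed.

Lemma polyfun_prod (T : Type) (r : seq T) (F : T -> nat -> CC) :
  (forall x, polyfun (F x)) -> polyfun (fun t => \prod_(x <- r) F x t).
Proof.
move=> PF; elim: r => [|x r [q qE]]; first by exists 1 => t; rewrite hornerC big_nil.
by have [p pE] := PF x; exists (p * q) => t; rewrite hornerM pE qE big_cons.
Qed.

Lemma polyfunM F G : polyfun F -> polyfun G -> polyfun (fun t => F t * G t).
Proof. by move=> [p pE] [q qE]; exists (p * q) => t; rewrite hornerM pE qE. Qed.

Lemma polyfun_pder_coef d (b : 'I_d -> nat) (p q : 'rV[int]_d) :
  polyfun (fun t => pder_coef b (p + q *+ t)).
Proof.
apply: polyfun_prod => i; apply: polyfun_prod => k.
apply: polyfun_ext (polyfun_affine (p 0 i + k.+1%:Z) (q 0 i)) => t.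
by rewrite !mxE mulmxnE addrAC.
Qed.

Lemma polyfun_eq0 F : polyfun F -> (forall N, exists2 t, (N <= t)%N & F t = 0) ->
  forall t, F t = 0.
Proof.
move=> [p pE] roots t; rewrite -pE; suff -> : p = 0 by rewrite horner0.
suff [l [size_l uniq_l roots_l]] : exists l : seq nat,
    [/\ size l = size p, uniq l & all (fun t => F t == 0) l].
  apply: (roots_geq_poly_eq0 (rs := [seq t%:R | t <- l])).
  - by apply/allP => _ /mapP [s sl ->]; rewrite /root pE (allP roots_l).
  - by rewrite map_inj_uniq // => m n /eqP; rewrite eqr_nat => /eqP.
  - by rewrite size_map size_l.
elim: (size p) => [|n [l [size_l uniq_l roots_l]]]; first by exists [::].
have [s s_gt Fs] := roots (\max_(x <- l) x).+1.
exists (s :: l); split=> /=; [by rewrite size_l | | by rewrite Fs eqxx].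
rewrite uniq_l andbT; apply: contraTN s_gt => sl.
by rewrite -ltnNge ltnS (leq_bigmax_seq (F := id) s sl).
Qed.

Section ScoredClosure.
Variables (d : nat) (A : seq 'rV[int]_d).
Implicit Types (f : ser d) (u v y z : 'rV[int]_d).

Definition in_scored_closure u :=
  forall F, facet_form A F -> exists v, in_NA A v /\ lform F v = lform F u.

Definition monomial v : ser d := fun u => (u == v)%:R.

Definition fin_supp f := exists s : seq 'rV[int]_d, forall u, f u != 0 -> u \in s.

Lemma monomial_neq0 v u : (monomial v u != 0) = (u == v).
Proof.
by rewrite /monomial; have [_|_] := eqVneq u v; rewrite ?mulr1n ?oner_eq0 ?mulr0n ?eqxx.
Qed.

Lemma fin_supp_monomial v : fin_supp (monomial v).
Proof. by exists [:: v] => u; rewrite monomial_neq0 inE. Qed.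

Lemma in_RA_monomial v : in_NA A v -> in_RA A (monomial v).
Proof. by split=> [|u]; [exact: fin_supp_monomial | rewrite monomial_neq0 => /eqP ->]. Qed.

Lemma separating_facet u : ~ in_scored_closure u ->
  exists2 F, facet_form A F & forall v, in_NA A v -> lform F v <> lform F u.
Proof.
move=> nSu; apply: NNPP => noF; apply: nSu => F F_facet; apply: NNPP => noV.
by apply: noF; exists F => // v vNA vF; apply: noV; exists v.
Qed.

Lemma weyl_term_monomial t z g : weyl_term t (monomial z) (z + g) =
  t.1.1 * pder_coef t.2 (z + g - t.1.2) * (g - t.1.2 + nat_row t.2 == 0)%:R.
Proof.
rewrite weyl_termE /monomial; congr (_ * _%:R); rewrite -subr_eq0; congr (_ == 0).
by apply/rowP => k; rewrite !mxE; ring.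
Qed.

Lemma polyfun_weyl_monomial (P : ser d -> ser d) : weyl_op P -> forall g p q,
  polyfun (fun n => P (monomial (p + q *+ n)) (p + q *+ n + g)).
Proof.
move=> [s sE] g p q.
have PE n : P (monomial (p + q *+ n)) (p + q *+ n + g) = \sum_(t <- s)
    t.1.1 * pder_coef t.2 (p + g - t.1.2 + q *+ n) * (g - t.1.2 + nat_row t.2 == 0)%:R.
  rewrite sE; apply: eq_bigr => t _.
  have := weyl_term_monomial t (p + q *+ n) g; rewrite /weyl_term => ->.
  by congr (_ * pder_coef _ _ * _); apply/rowP => k; rewrite !mxE mulmxnE; ring.
apply: (polyfun_ext PE); apply: polyfun_sum => t.
apply: polyfunM (polyfun_const _).
exact: polyfunM (polyfun_const _) (polyfun_pder_coef _ _ _).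
Qed.

(* Along the facet progressions of [facet_progression] the coefficient
   [z |-> P (monomial z) (z + u - y)] vanishes, and it is polynomial on lines. *)
Lemma DRA_monomial_vanish P y u : DRA A P -> in_scored_closure y -> ~ in_scored_closure u ->
  P (monomial y) u = 0.
Proof.
move=> [WP PRA] Sy /separating_facet [F F_facet F_miss].
have [v0 [v0NA Fv0]] := Sy F F_facet.
pose h z := P (monomial z) (z + (u - y)).
have h_eq0 z : in_NA A z -> lform F z = lform F y -> h z = 0.
  move=> zNA Fz; apply: NNPP => /eqP hz.
  have [_ /(_ _ hz) zgNA] := PRA _ (in_RA_monomial zNA).
  by apply: (F_miss _ zgNA); rewrite lformE linearD linearB /= -!lformE Fz addrC subrK.
have Fyv0 : lform F (y - v0) = 0 by rewrite lformE linearB /= -!lformE Fv0 subrr.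
have [m m_gt0 [c Fc [K progNA]]] := facet_progression F_facet v0NA Fyv0.
have h_mn n : h (v0 + (y - v0) *+ (m * n)) = 0.
  have := polyfun_eq0 (polyfun_weyl_monomial WP (u - y) (v0 + (y - v0) *+ (m * n)) c) _ 0%N.
  rewrite mulr0n addr0; apply=> N; exists (N + n * K)%N; first exact: leq_addr.
  apply: h_eq0; first exact/progNA/leq_addl.
  by rewrite lformE !linearD !linearMn /= -!lformE Fyv0 Fc !mul0rn !addr0.
have := polyfun_eq0 (polyfun_weyl_monomial WP (u - y) v0 (y - v0)) _ 1%N.
rewrite mulr1n (addrC v0 (y - v0)) subrK (addrC y (u - y)) subrK; apply=> N.
by exists (m * N)%N; [rewrite leq_pmull | exact: h_mn].
Qed.

Definition in_CS f := fin_supp f /\ forall u, f u != 0 -> in_scored_closure u.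

Lemma sum_monomial (r : seq 'rV[int]_d) f v : uniq r ->
  \sum_(y <- r) f y * monomial y v = if v \in r then f v else 0.
Proof.
elim: r => [|y r IH] /=; first by rewrite big_nil.
case/andP => yr ur; rewrite big_cons IH // inE /monomial.
by have [->|_] := eqVneq v y; rewrite ?(negPf yr) ?mulr1 ?addr0 ?mulr0 ?add0r.
Qed.

Lemma weyl_op_expand (P : ser d -> ser d) f (s : seq 'rV[int]_d) : weyl_op P ->
  (forall u, f u != 0 -> u \in s) ->
  forall u, P f u = \sum_(y <- undup s) f y * P (monomial y) u.
Proof.
move=> [ts tsE] f_supp u; rewrite tsE.
have fE v : f v = \sum_(y <- undup s) f y * monomial y v.
  rewrite sum_monomial ?undup_uniq // mem_undup.
  by case: ifP => // vs; apply/eqP; apply: contraFT vs => /f_supp.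
under eq_bigr do rewrite -/(weyl_term _ _ _) weyl_termE fE mulr_sumr.
rewrite exchange_big /=; apply: eq_bigr => y _; rewrite tsE mulr_sumr.
by apply: eq_bigr => t _; rewrite -/(weyl_term _ _ _) weyl_termE; ring.
Qed.

Lemma weyl_op_fin_supp (P : ser d -> ser d) f : weyl_op P -> fin_supp f -> fin_supp (P f).
Proof.
move=> [ts tsE] [s f_supp]; pose G := [seq t.1.2 - nat_row t.2 | t <- ts].
exists [seq v + g | v <- s, g <- G] => u Pu.
pose t0 : CC * 'rV[int]_d * ('I_d -> nat) := (0, 0, fun _ => 0%N).
have [i ti] : exists i : 'I_(size ts), weyl_term (nth t0 ts i) f u != 0.
  apply/existsP; apply: contraNT Pu; rewrite negb_exists => /forallP t_eq0.
  by rewrite tsE (big_nth t0) big_mkord big1 // => i _; apply/eqP/negPn/t_eq0.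
move: ti; set t := nth t0 ts i; rewrite weyl_termE mulf_eq0 negb_or => /andP [_ /f_supp fs].
have tG : t.1.2 - nat_row t.2 \in G.
  by rewrite /t -(nth_map t0 0 (fun t => t.1.2 - nat_row t.2)) // mem_nth ?size_map.
have -> : u = u - t.1.2 + nat_row t.2 + (t.1.2 - nat_row t.2).
  by apply/rowP => k; rewrite !mxE; ring.
exact: allpairs_f.
Qed.

Lemma DRA_in_CS P f : DRA A P -> in_CS f -> in_CS (P f).
Proof.
move=> DP [[s f_supp] fS]; split; first exact: weyl_op_fin_supp DP.1 (ex_intro _ s f_supp).
move=> u /eqP Pu; apply: NNPP => nSu; apply: Pu.
rewrite (weyl_op_expand DP.1 f_supp) big1_seq // => y /andP [_ ys].
have [->|fy] := eqVneq (f y) 0; first by rewrite mul0r.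
by rewrite (DRA_monomial_vanish DP (fS y fy) nSu) mulr0.
Qed.
End ScoredClosure.

Section Ideal.
Variables (d : nat) (A : seq 'rV[int]_d).

Lemma in_RA0 : in_RA A (fun _ => 0).
Proof. by split=> [|u]; [exists [::] | ]; rewrite eqxx. Qed.

Lemma in_RAB f g : in_RA A f -> in_RA A g -> in_RA A (fun u => f u - g u).
Proof.
move=> [[sf f_supp] fNA] [[sg g_supp] gNA].
have fg_neq0 u : f u - g u != 0 -> f u != 0 \/ g u != 0.
  by have [f0|] := eqVneq (f u) 0; [rewrite f0 sub0r oppr_eq0; right | left].
split=> [|u /fg_neq0 [/fNA|/gNA] //].
by exists (sf ++ sg) => u /fg_neq0 [/f_supp|/g_supp]; rewrite mem_cat => ->; rewrite ?orbT.
Qed.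

Lemma DRA0 : DRA A (fun _ _ => 0).
Proof. by split=> [|f _]; [exact: weyl_op0 | exact: in_RA0]. Qed.

Lemma DRAB P Q : DRA A P -> DRA A Q -> DRA A (fun f u => P f u - Q f u).
Proof.
move=> [WP RP] [WQ RQ]; split=> [|f fR]; first exact: weyl_opB.
exact: in_RAB (RP f fR) (RQ f fR).
Qed.

Lemma DRA_comp P Q : DRA A P -> DRA A Q -> DRA A (fun f => P (Q f)).
Proof. by move=> [WP RP] [WQ RQ]; split=> [|f /RQ /RP //]; exact: weyl_op_comp. Qed.

Lemma DRA_id : DRA A id.
Proof. by split=> //; exact: weyl_op_id. Qed.

Definition CS_ideal P := DRA A P /\ forall f, in_CS A f -> in_RA A (P f).

Lemma CS_ideal_two_sided : two_sided_ideal A CS_ideal.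
Proof.
split=> [P [] //|||P Q DP [DQ IQ]].
- by split=> [|f _]; [exact: DRA0 | exact: in_RA0].
- move=> P Q [DP IP] [DQ IQ]; split=> [|f fC]; first exact: DRAB.
  exact: in_RAB (IP f fC) (IQ f fC).
split; split; [exact: DRA_comp | move=> f /IQ/DP.2 // | exact: DRA_comp |].
by move=> f /(DRA_in_CS DP)/IQ.
Qed.

Lemma shift_CS_ideal b : in_NA A b ->
  (forall x, in_scored_closure A x -> in_NA A (x + b)) -> CS_ideal (shift b).
Proof.
move=> bNA b_cond.
have shift_supp f : fin_supp f -> fin_supp (shift b f).
  move=> [s f_supp]; exists [seq v + b | v <- s] => u /f_supp ?.
  by apply/mapP; exists (u - b); rewrite ?subrK.
split; first split; first exact: weyl_op_shift.
  move=> f [f_supp fNA]; split=> [|u /fNA ?]; first exact: shift_supp.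
  by rewrite -(subrK b u); exact: in_NA_add.
move=> f [f_supp fS]; split=> [|u /fS ?]; first exact: shift_supp.
by rewrite -(subrK b u); exact: b_cond.
Qed.

Lemma id_notin_CS_ideal u : in_scored_closure A u -> ~ in_NA A u -> ~ CS_ideal id.
Proof.
move=> Su nu [_ /(_ (monomial u)) RA_monomial].
apply/nu/(RA_monomial _).2; last by rewrite monomial_neq0.
by split=> [|v]; [exact: fin_supp_monomial | rewrite monomial_neq0 => /eqP ->].
Qed.

Lemma lform_NA_ge0 F v :
  (forall a, a \in A -> 0 <= lform F a) -> in_NA A v -> 0 <= lform F v.
Proof.
move=> FA [c ->]; rewrite lformE linear_sum sumr_ge0 // => i _.
by rewrite linearMn mulrn_wge0 // FA // mem_nth.
Qed.

Lemma scored_closure_in_cone u : generates_group A -> in_scored_closure A u ->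
  in_cone (qgen A) (qrow u).
Proof.
move=> gen Su; apply: NNPP => /(facet_form_separation gen) [F F_facet Fu].
have [v [vNA vF]] := Su F F_facet; case: F_facet => _ FA _.
by move: Fu; rewrite -vF ltNge lform_NA_ge0.
Qed.
End Ideal.

Unset Implicit Arguments.
Theorem proposition8p5 (d : nat) (A : seq 'rV[int]_d) :
  generates_group A -> DRA_simple A -> scored A.
Proof.
move=> gen simple u; split=> [uNA F _|Su]; first by exists u.
apply: NNPP => nu; have [b bNA b_cond] := conductor gen.
have b_shift : forall x, in_scored_closure A x -> in_NA A (x + b).
  by move=> x /(scored_closure_in_cone gen) /b_cond.
case: (simple _ (CS_ideal_two_sided A)) => [zero|full].
  have /zero/(congr1 (fun P => P (monomial 0) b)) := shift_CS_ideal bNA b_shift.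
  by rewrite /shift /monomial subrr eqxx => /eqP; rewrite oner_eq0.
exact: id_notin_CS_ideal Su nu (full _ (DRA_id A)).
Qed.
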